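(* Let $P(X,Y,t)=\big(X+\frac1X-2\big)\big(Y+\frac1Y+2\big)+2i\dfrac{(t-i)^4}{t^3-t}$ and $D=\{(X,Y,t)\in(\mathbb{C}^\times)^3 : P(X,Y,t)=0,\ |X|=|Y|=1,\ |t|>1\}$. Let $C_1$ (resp. $C_2$) be the circle with center $1$ (resp. $-1$) passing through $i$ in the complex plane. Then the image of $D$ under $(X,Y,t)\mapsto t$ is the union of the two arcs $C_1\cap\{|t|>1\}$ and $C_2\cap\{|t|>1\}$. *)

From HB Require Import structures.
From mathcomp Require Import all_boot all_order all_algebra.
From mathcomp Require Import complex.
From mathcomp Require Import reals.
Set Implicit Arguments. Unset Strict Implicit. Unset Printing Implicit Defensive.
Import Order.TTheory GRing.Theory Num.Theory ComplexField.
Local Open Scope ring_scope.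
Local Open Scope complex_scope.

Definition Ppoly (R : realType) (X Y t : R[i]) : R[i] :=
  (X + X^-1 - 2) * (Y + Y^-1 + 2) + 2 * 'i * (t - 'i) ^+ 4 / (t ^+ 3 - t).

Definition inD (R : realType) (X Y t : R[i]) : Prop :=
  [/\ X != 0, Y != 0, t != 0, Ppoly X Y t = 0 &
      [/\ `|X| = 1, `|Y| = 1 & 1 < `|t|]].

Definition onC1 (R : realType) (t : R[i]) : Prop := `|t - 1| = `|'i - 1|.
Definition onC2 (R : realType) (t : R[i]) : Prop := `|t - (-1)| = `|'i - (-1)|.

From HB Require Import structures.
From mathcomp Require Import all_boot all_order all_algebra.
From mathcomp Require Import complex.
From mathcomp Require Import reals.
From mathcomp Require Import ring lra.
Import Order.TTheory GRing.Theory Num.Theory ComplexField.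
Local Open Scope ring_scope.
Local Open Scope complex_scope.

(* For |X| = |Y| = 1 we have X + 1/X - 2 = 2 Re X - 2 and Y + 1/Y + 2 =
   2 Re Y + 2, so the first summand of P sweeps exactly the real interval
   [-16, 0]: t is in the image of D iff |t| > 1 and G(t) = 2i (t - i)^4 /
   (t^3 - t) is a real number in [0, 16].  Writing G = N / D and t = a + ib,
   G(t) is real iff
     N conj(D) - conj(N) D = 4i a (|t|^2 - 1) (|t - 1|^2 - 2) (|t + 1|^2 - 2)
   vanishes.  For |t| > 1 this leaves the imaginary axis, where G(t) lies
   outside [0, 16], and the circles C1 and C2.  On C1 an explicit formula for
   G(t) shows that it lies in [0, 16], and C2 follows by the symmetry
   G(- conj t) = conj (G t), which exchanges C1 and C2. *)

Section ImageOfD.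
Context {R : realType}.
Implicit Types (X Y t : R[i]) (a b k w : R).

(* Not the [Re]/[Im] of numClosedFieldType, which take values in [R[i]]. *)
Local Notation Re := complex.Re.
Local Notation Im := complex.Im.

Definition Fpart X Y := (X + X^-1 - 2) * (Y + Y^-1 + 2).
Definition Gnum t := 2 * 'i * (t - 'i) ^+ 4.
Definition Gden t := t ^+ 3 - t.
Definition Gpart t := Gnum t / Gden t.

Definition Gpart_in_0_16 t := exists2 w, 0 <= w <= 16 & Gpart t = w%:C.

Lemma PpolyE X Y t : Ppoly X Y t = Fpart X Y + Gpart t.
Proof. by []. Qed.

Lemma eq_normcE X Y :
  `|X| = `|Y| <-> Re X ^+ 2 + Im X ^+ 2 = Re Y ^+ 2 + Im Y ^+ 2.
Proof.
split=> XY; first by apply: complexI; rewrite !add_Re2_Im2 XY.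
by rewrite !normc_def XY.
Qed.

Lemma normc_gt1 {t} : 1 < `|t| -> 1 < Re t ^+ 2 + Im t ^+ 2.
Proof.
move=> t_gt1; rewrite -ltcR add_Re2_Im2 rmorph1.
by rewrite -(expr1n _ 2) ltrXn2r // ler01.
Qed.

Lemma normc1_addV {X} : `|X| = 1 -> X + X^-1 = 2 * (Re X)%:C.
Proof. by move=> X1; rewrite invc_norm X1 expr1n invr1 mul1r addcJ. Qed.

Lemma normc1_Re {X} : `|X| = 1 -> -1 <= Re X <= 1.
Proof. by move=> X1; rewrite -ler_norml -lecR rmorph1 -X1 normc_ge_Re. Qed.

Lemma Fpart_normc1 {X Y} : `|X| = 1 -> `|Y| = 1 ->
  Fpart X Y = ((2 * Re X - 2) * (2 * Re Y + 2))%:C.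
Proof.
move=> X1 Y1; rewrite /Fpart !normc1_addV //.
by rewrite !(rmorphM, rmorphB, rmorphD, rmorph1).
Qed.

Lemma Fpart_normc1_range k :
  (exists X Y, [/\ `|X| = 1, `|Y| = 1 & Fpart X Y = k%:C]) <-> -16 <= k <= 0.
Proof.
split=> [[X [Y []]] | k_range].
  move=> X1 Y1; rewrite Fpart_normc1 // => /complexI <-.
  by move: (normc1_Re X1) (normc1_Re Y1) => /andP[? ?] /andP[? ?]; nra.
pose c := 1 + k / 8; pose s := Num.sqrt (1 - c ^+ 2).
have c2_le1 : c ^+ 2 <= 1 by rewrite /c; nra.
have X1 : `|c +i* s| = 1.
  by rewrite normc_def /= sqr_sqrtr ?subr_ge0 // addrC subrK sqrtr1.
exists (c +i* s), 1; split => //; first by rewrite normr1.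
by rewrite Fpart_normc1 ?normr1 //= /c; congr (_%:C); field.
Qed.

Lemma Gden_neq0 {t} : 1 < `|t| -> Gden t != 0.
Proof.
move=> t_gt1; have -> : Gden t = t * (t - 1) * (t + 1) by rewrite /Gden; ring.
have t_neq u : `|u| <= 1 -> t != u.
  by move=> u_le1; apply: contraTneq t_gt1 => ->; rewrite le_gtF.
have [t0 t1 tN1] : [/\ t != 0, t != 1 & t != -1].
  by split; apply: t_neq; rewrite ?normrN ?normr0 ?normr1 ?ler01.
by rewrite !mulf_neq0 ?subr_eq0 ?addr_eq0.
Qed.

Lemma Gnum_Gden_cross_conj a b :
  let t := a +i* b in
  Gnum t * conjc (Gden t) - conjc (Gnum t) * Gden t =
  'i * (4 * a * (a ^+ 2 + b ^+ 2 - 1) *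
        ((a - 1) ^+ 2 + b ^+ 2 - 2) * ((a + 1) ^+ 2 + b ^+ 2 - 2))%:C.
Proof.
rewrite /Gnum /Gden.
by apply/eqP; rewrite eq_complex /=; apply/andP; split; apply/eqP; ring.
Qed.

Lemma onC1E t : onC1 t <-> (Re t - 1) ^+ 2 + Im t ^+ 2 = 2.
Proof. by rewrite /onC1 eq_normcE; case: t => a b /=; split=> E; lra. Qed.

Lemma onC2E t : onC2 t <-> (Re t + 1) ^+ 2 + Im t ^+ 2 = 2.
Proof. by rewrite /onC2 eq_normcE; case: t => a b /=; split=> E; lra. Qed.

(* Gpart (0 +i* b) = -2 (b - 1)^4 / (b^3 + b): it is negative for b > 1, and
   exceeds 16 for b < -1 since 2 (b - 1)^4 + 16 (b^3 + b) = 2 (b + 1)^4. *)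
Lemma Gnum_imaginary_axis_neq {b w} : 1 < b ^+ 2 -> 0 <= w <= 16 ->
  Gnum (0 +i* b) != w%:C * Gden (0 +i* b).
Proof.
move=> b2_gt1 /andP[w_ge0 w_le16].
apply/eqP => /(congr1 (fun z => Im z)) /= Im_eq.
have [b_ge0 | b_lt0] := lerP 0 b.
  have : 0 < (b - 1) ^+ 4 by rewrite exprn_gt0 // subr_gt0; nra.
  have : 0 <= w * (b ^+ 3 + b) by rewrite mulr_ge0 // addr_ge0 ?exprn_ge0.
  lra.
have : 0 < (b + 1) ^+ 4 by rewrite exprn_even_gt0 // addr_eq0; apply/eqP; nra.
have : 0 <= (16 - w) * - (b ^+ 3 + b) by rewrite mulr_ge0 ?subr_ge0 //; nra.
lra.
Qed.

Lemma Gnum_eq_Gden {t w} :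
  1 < `|t| -> Gpart t = w%:C -> Gnum t = w%:C * Gden t.
Proof. by move=> t_gt1 <-; rewrite divfK ?Gden_neq0. Qed.

Lemma Gpart_in_0_16_onC t : 1 < `|t| -> Gpart_in_0_16 t -> onC1 t \/ onC2 t.
Proof.
move=> t_gt1 [w w_range /(Gnum_eq_Gden t_gt1) Gnum_w].
have : Gnum t * conjc (Gden t) - conjc (Gnum t) * Gden t = 0.
  by rewrite Gnum_w (conjc_is_multiplicative R).1 conjc_real; ring.
have := normc_gt1 t_gt1; rewrite onC1E onC2E.
case: t Gnum_w {t_gt1} => a b Gnum_w /= ab_gt1.
rewrite Gnum_Gden_cross_conj => /(congr1 (fun z => Im z)) /=.
rewrite mul0r add0r mul1r => /eqP; rewrite !mulf_eq0 !subr_eq0 -!orbA.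
case/or4P=> [/eqP | /eqP a0 | /eqP | /orP[/eqP C1 | /eqP C2]];
  [lra | | lra | by left | by right].
have b2_gt1 : 1 < b ^+ 2 by rewrite a0 in ab_gt1; lra.
by have := Gnum_imaginary_axis_neq b2_gt1 w_range; rewrite -a0 Gnum_w eqxx.
Qed.

(* On C1, Gpart t = 8 - 8 b (1 + a) / (1 + 2 a); the polynomial factors
   below are the quotients of the two coordinate equations by the equation
   of C1, and (b (1 + a))^2 = (1 + 2 a)^2 - a^4 on C1 gives the bounds. *)
Lemma onC1_Gpart_in_0_16 t : onC1 t -> 1 < `|t| -> Gpart_in_0_16 t.
Proof.
move=> C1t t_gt1; have D_neq0 := Gden_neq0 t_gt1.
move: C1t (normc_gt1 t_gt1); rewrite onC1E.
case: t D_neq0 {t_gt1} => a b D_neq0 /= C1 ab_gt1.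
have C1' : (a - 1) ^+ 2 + b ^+ 2 - 2 = 0 by rewrite C1 subrr.
pose d := 1 + 2 * a; pose p := 8 * d - 8 * b * (1 + a).
have d_gt0 : 0 < d by rewrite /d; lra.
have Gnum_d : d%:C * Gnum (a +i* b) = p%:C * Gden (a +i* b).
  rewrite /Gnum /Gden /p /d; apply/eqP; rewrite eq_complex /=.
  apply/andP; split; apply/eqP.
    have : ((a - 1) ^+ 2 + b ^+ 2 - 2) * (-16 * a * b - 8 * a ^+ 2 * b) = 0.
      by rewrite C1' mul0r.
    lra.
  have : ((a - 1) ^+ 2 + b ^+ 2 - 2) *
         (-2 - 6 * b ^+ 2 - 4 * a * b ^+ 2 + 10 * a ^+ 2 + 4 * a ^+ 3) = 0.
    by rewrite C1' mul0r.
  lra.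
have bound : (b * (1 + a)) ^+ 2 <= d ^+ 2.
  have -> : (b * (1 + a)) ^+ 2 =
      d ^+ 2 - a ^+ 4 + ((a - 1) ^+ 2 + b ^+ 2 - 2) * (1 + a) ^+ 2.
    by rewrite /d; ring.
  by rewrite C1' mul0r addr0 lerBlDr lerDl exprn_even_ge0.
exists (p / d).
  by rewrite divr_ge0 ?ler_pdivrMr /= ?(ltW d_gt0) /p; nra.
apply/(canLR (mulfK D_neq0)); rewrite fmorph_div mulrAC -Gnum_d mulrC mulKf //.
by rewrite fmorph_eq0 lt0r_neq0.
Qed.

Lemma Gnum_reflect t : Gnum (- conjc t) = - conjc (Gnum t).
Proof.
case: t => a b; rewrite /Gnum.
by apply/eqP; rewrite eq_complex /=; apply/andP; split; apply/eqP; ring.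
Qed.

Lemma Gden_reflect t : Gden (- conjc t) = - conjc (Gden t).
Proof.
case: t => a b; rewrite /Gden.
by apply/eqP; rewrite eq_complex /=; apply/andP; split; apply/eqP; ring.
Qed.

Lemma Gpart_reflect t : Gpart (- conjc t) = conjc (Gpart t).
Proof.
rewrite /Gpart Gnum_reflect Gden_reflect invrN mulrNN.
by rewrite [RHS](conjc_is_multiplicative R).1 conjc_inv.
Qed.

Lemma Gpart_in_0_16_reflect t : Gpart_in_0_16 t -> Gpart_in_0_16 (- conjc t).
Proof.
by move=> [w w_range Gw]; exists w; rewrite // Gpart_reflect Gw conjc_real.
Qed.

Lemma onC2_reflect t : onC2 t -> onC1 (- conjc t).
Proof. by rewrite onC1E onC2E; case: t => a b /= C2; lra. Qed.

Lemma Gpart_in_0_16_onCE {t} : 1 < `|t| -> Gpart_in_0_16 t <-> onC1 t \/ onC2 t.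
Proof.
move=> t_gt1; split; first exact: Gpart_in_0_16_onC.
case=> [C1t | /onC2_reflect C1t']; first exact: onC1_Gpart_in_0_16.
have -> : t = - conjc (- conjc t) by rewrite raddfN /= conjcK opprK.
by apply/Gpart_in_0_16_reflect/onC1_Gpart_in_0_16; rewrite // normrN normcJ.
Qed.

Lemma exists_inD t :
  (exists X Y, inD X Y t) <-> 1 < `|t| /\ Gpart_in_0_16 t.
Proof.
split=> [[X [Y [_ _ _ P0 [X1 Y1 t_gt1]]]] | [t_gt1 [w w_range Gw]]].
  have F_G : Fpart X Y = - Gpart t by apply/eqP; rewrite -addr_eq0 -PpolyE P0.
  have := Fpart_normc1 X1 Y1; set k := (_ * _) => Fk.
  have /andP[k_ge k_le] : -16 <= k <= 0.
    by apply/Fpart_normc1_range; exists X, Y.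
  split=> //; exists (- k); first by apply/andP; split; lra.
  by rewrite -[Gpart t]opprK -F_G Fk rmorphN.
have /Fpart_normc1_range [X [Y [X1 Y1 Fw]]] : -16 <= - w <= 0.
  by case/andP: w_range => *; apply/andP; split; lra.
have normc1_neq0 (u : R[i]) : `|u| = 1 -> u != 0.
  by move=> u1; rewrite -normr_eq0 u1 oner_eq0.
exists X, Y; split.
- exact: normc1_neq0.
- exact: normc1_neq0.
- by rewrite -normr_gt0 (lt_trans ltr01).
- by rewrite PpolyE Fw Gw rmorphN addNr.
- by split.
Qed.

End ImageOfD.

Theorem lemma9p13 (R : realType) (t : R[i]) :
  (exists X Y : R[i], inD X Y t) <->
  ((onC1 t /\ 1 < `|t|) \/ (onC2 t /\ 1 < `|t|)).
Proof.
split=> [/exists_inD [t_gt1 /(Gpart_in_0_16_onCE t_gt1)] | onCt].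
  by case; [left | right].
have t_gt1 : 1 < `|t| by case: onCt => -[].
apply/exists_inD; split; rewrite // Gpart_in_0_16_onCE //.
by case: onCt => -[]; [left | right].
Qed.
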